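(* There is a subset $A$ of the unit circle $S^1\subseteq\mathbb{R}^2$ such that for every line $l\subseteq\mathbb{R}^2$ and the orthogonal projection $\pi:\mathbb{R}^2\to l$, the set $\pi[A]$ is a Bernstein set in $\pi[S^1]$.
   Context: A subset $S$ of a Polish space $Y$ is a Bernstein set in $Y$ if for every nonempty perfect set $P\subseteq Y$ we have $S\cap P\neq\emptyset$ and $(Y\setminus S)\cap P\neq\emptyset$. *)

From Stdlib Require Import Reals.
Open Scope R_scope.

Definition pt := (R * R)%type.

Definition dist2 (p q : pt) : R :=
  sqrt ((fst p - fst q)^2 + (snd p - snd q)^2).

Definition S1 (x : pt) : Prop := (fst x)^2 + (snd x)^2 = 1.

Definition dot (p q : pt) : R := fst p * fst q + snd p * snd q.

(* The line l = { p + t u | t in R }, u <> 0, and the orthogonal projection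
   of R^2 onto it. Every line of R^2 is of this form. *)
Definition line (p u : pt) (y : pt) : Prop :=
  exists t : R, y = (fst p + t * fst u, snd p + t * snd u).

Definition orth_proj (p u : pt) (x : pt) : pt :=
  let t := dot (fst x - fst p, snd x - snd p) u / dot u u in
  (fst p + t * fst u, snd p + t * snd u).

Definition image (f : pt -> pt) (A : pt -> Prop) (y : pt) : Prop :=
  exists x, A x /\ y = f x.

Definition closed_in (Y P : pt -> Prop) : Prop :=
  forall x, Y x ->
    (forall eps, 0 < eps -> exists y, P y /\ dist2 x y < eps) -> P x.

Definition no_isolated (P : pt -> Prop) : Prop :=
  forall x, P x -> forall eps, 0 < eps -> exists y, P y /\ y <> x /\ dist2 x y < eps.

Definition perfect_in (Y P : pt -> Prop) : Prop :=
  (forall x, P x -> Y x) /\ closed_in Y P /\ no_isolated P.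

Definition Bernstein_in (Y S : pt -> Prop) : Prop :=
  forall P, perfect_in Y P -> (exists x, P x) ->
    (exists x, P x /\ S x) /\ (exists x, P x /\ Y x /\ ~ S x).

From Stdlib Require Import Reals Lra Lia ZArith.
From Stdlib Require Import Classical ClassicalEpsilon FunctionalExtensionality PropExtensionality.
From Stdlib Require Cantor.
From mathcomp Require boolp wochoice.
Open Scope R_scope.

(* Write [s = dot x e] for the coordinate of a point [x] along the unit
   direction [e] of the line; [x |-> s] identifies the projection of [S1] with
   [[-1, 1]] isometrically, so a perfect subset of it becomes a perfect set
   [Q] included in [[-1, 1]].  It therefore suffices to find [A] in [S1] such
   that for every such pair [(e, Q)] some [a] in [A] has [dot a e] in [Q],
   and some [y] in [Q] is not of the form [dot a e] with [a] in [A].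

   Points of Cantor space code all pairs [(e, Q)], and every nonempty perfect
   set contains a copy of Cantor space.  Along a well-ordering of the codes in
   which every stage has "fewer than continuum" predecessors, we choose a
   point [a] with [dot a e] in [Q] avoiding the at most two points of the
   circle with [dot a e' = y'] for every earlier witness [y'] and direction
   [e'], and then a witness [y] in [Q] avoiding [dot a' e] for every point
   [a'] chosen so far. *)

Module WellOrdering.
Import mathcomp.boot.ssreflect mathcomp.boot.ssrbool mathcomp.boot.eqtype.
Import mathcomp.classical.boolp mathcomp.classical.wochoice.

Lemma exists_wf_trichotomous (T : Type) :
  exists lt : T -> T -> Prop,
    well_founded lt /\ forall x y, lt x y \/ x = y \/ lt y x.
Proof.
have [R Rwo] := well_ordering_principle {classic T}.
have Rchain : wo_chain R predT by move=> A _; exact: Rwo.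
have Rtotal := wo_chainW Rchain.
have Ranti := wo_chain_antisymmetric Rchain.
pose lt x y := ~~ R y x.
exists lt; split.
- move=> x; apply: NNPP => nacc.
  have [|z [[/asboolP zacc zmin] _]] := Rwo [pred z | `[< ~ Acc lt z >]].
    by exists x; apply/asboolP.
  apply: zacc; constructor=> y /negP Rzy; apply: NNPP => yacc.
  by apply: Rzy; apply: zmin; apply/asboolP.
- move=> x y; rewrite /lt; case Ryx: (R y x); last by left.
  case Rxy: (R x y); last by right; right.
  by right; left; apply: Ranti => //; rewrite Rxy Ryx.
Qed.
End WellOrdering.

(** * Perfect sets contain a copy of Cantor space *)

Definition cantor := nat -> bool.

Definition closedR (K : R -> Prop) : Prop :=
  forall x, (forall eps, 0 < eps -> exists y, K y /\ Rabs (x - y) < eps) -> K x.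

Definition no_isolated_pointR (Q : R -> Prop) : Prop :=
  forall s, Q s -> forall eps, 0 < eps -> exists t, Q t /\ t <> s /\ Rabs (s - t) < eps.

Lemma Un_cv_Rabs_le (u : nat -> R) l c d m :
  Un_cv u l -> (forall n, (m <= n)%nat -> Rabs (u n - c) <= d) -> Rabs (l - c) <= d.
Proof.
  intros Hu Hb. apply Rnot_lt_le; intros Hlt.
  destruct (Hu (Rabs (l - c) - d)) as [N HN]; [lra|].
  specialize (HN (max N m) (Nat.le_max_l _ _)).
  specialize (Hb (max N m) (Nat.le_max_r _ _)).
  unfold R_dist in HN.
  pose proof (Rabs_triang (l - u (max N m)) (u (max N m) - c)) as Htri.
  rewrite <- Rabs_Ropp in HN.
  replace (l - u (max N m) + (u (max N m) - c)) with (l - c) in Htri by ring.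
  replace (- (u (max N m) - l)) with (l - u (max N m)) in HN by ring.
  lra.
Qed.

Section CantorScheme.

Variable Q : R -> Prop.
Hypothesis Q_closed : closedR Q.
Hypothesis Q_no_isolated : no_isolated_pointR Q.
Hypothesis Q_nonempty : exists s, Q s.

Definition neighbour (x r : R) : R :=
  epsilon (inhabits 0) (fun z => Q z /\ z <> x /\ Rabs (x - z) < r / 4).

Lemma neighbour_spec x r : Q x -> 0 < r ->
  Q (neighbour x r) /\ neighbour x r <> x /\ Rabs (x - neighbour x r) < r / 4.
Proof.
  intros Qx Hr. unfold neighbour. apply epsilon_spec, Q_no_isolated; [exact Qx | lra].
Qed.

(* The radius [|x - z| / 3] keeps the limits of the two children apart, and
   [r / 4] makes the centres converge. *)
Definition split_ball (ball : R * R) (bit : bool) : R * R :=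
  let (x, r) := ball in
  let z := neighbour x r in
  (if bit then z else x, Rmin (Rabs (x - z) / 3) (r / 4)).

Fixpoint ball_of (b : cantor) (n : nat) : R * R :=
  match n with
  | O => (epsilon (inhabits 0) Q, 1)
  | S k => split_ball (ball_of b k) (b k)
  end.

Lemma ball_of_spec b n : Q (fst (ball_of b n)) /\ 0 < snd (ball_of b n).
Proof.
  induction n as [|n [Qx Hr]]; simpl.
  - split; [apply epsilon_spec, Q_nonempty | lra].
  - destruct (ball_of b n) as [x r]; simpl in *.
    destruct (neighbour_spec x r Qx Hr) as [Qz [Hzx _]].
    split; [destruct (b n); assumption|].
    apply Rmin_glb_lt; [|lra].
    assert (0 < Rabs (x - neighbour x r)) by (apply Rabs_pos_lt; intro; apply Hzx; lra).
    lra.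
Qed.

Lemma ball_of_step b n :
  Rabs (fst (ball_of b (S n)) - fst (ball_of b n)) <= snd (ball_of b n) / 4 /\
  snd (ball_of b (S n)) <= snd (ball_of b n) / 4.
Proof.
  destruct (ball_of_spec b n) as [Qx Hr]. simpl.
  destruct (ball_of b n) as [x r]; simpl in *.
  destruct (neighbour_spec x r Qx Hr) as [_ [_ Hd]].
  split; [|apply Rmin_r].
  destruct (b n).
  - rewrite Rabs_minus_sym. lra.
  - unfold Rminus. rewrite Rplus_opp_r, Rabs_R0. lra.
Qed.

Lemma ball_of_drift b m k :
  Rabs (fst (ball_of b (m + k)) - fst (ball_of b m))
    <= snd (ball_of b m) / 3 - snd (ball_of b (m + k)) / 3.
Proof.
  induction k as [|k IH].
  - rewrite Nat.add_0_r. unfold Rminus. rewrite Rplus_opp_r, Rabs_R0. lra.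
  - rewrite Nat.add_succ_r.
    destruct (ball_of_step b (m + k)) as [Hc Hr].
    pose proof (Rabs_triang (fst (ball_of b (S (m + k))) - fst (ball_of b (m + k)))
                            (fst (ball_of b (m + k)) - fst (ball_of b m))) as Htri.
    replace (fst (ball_of b (S (m + k))) - fst (ball_of b (m + k))
             + (fst (ball_of b (m + k)) - fst (ball_of b m)))
      with (fst (ball_of b (S (m + k))) - fst (ball_of b m)) in Htri by ring.
    lra.
Qed.

Lemma ball_of_radius b n : snd (ball_of b n) <= (/ 4) ^ n.
Proof.
  induction n as [|n IH]; [simpl; lra|].
  destruct (ball_of_step b n) as [_ Hr]. change ((/ 4) ^ S n) with (/ 4 * (/ 4) ^ n). lra.
Qed.

Lemma ball_of_cauchy b : Cauchy_crit (fun n => fst (ball_of b n)).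
Proof.
  intros eps Heps.
  destruct (pow_lt_1_zero (/ 4) ltac:(rewrite Rabs_pos_eq; lra) eps Heps) as [N HN].
  assert (Hfar : forall p q, (N <= p <= q)%nat ->
            Rabs (fst (ball_of b q) - fst (ball_of b p)) < eps).
  { intros p q Hpq. replace q with (p + (q - p))%nat by lia.
    pose proof (ball_of_drift b p (q - p)).
    pose proof (proj2 (ball_of_spec b (p + (q - p)))).
    pose proof (ball_of_radius b p).
    specialize (HN p ltac:(lia)). rewrite Rabs_pos_eq in HN by (apply pow_le; lra).
    lra. }
  exists N. intros n m Hn Hm. unfold R_dist.
  destruct (Nat.le_ge_cases n m).
  - rewrite Rabs_minus_sym. apply Hfar. lia.
  - apply Hfar. lia.
Qed.

Definition cantor_embedding (b : cantor) : R :=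
  proj1_sig (R_complete _ (ball_of_cauchy b)).

Lemma cantor_embedding_near b m :
  Rabs (cantor_embedding b - fst (ball_of b m)) <= snd (ball_of b m) / 3.
Proof.
  apply (Un_cv_Rabs_le _ _ _ _ m (proj2_sig (R_complete _ (ball_of_cauchy b)))).
  intros n Hn. replace n with (m + (n - m))%nat by lia.
  pose proof (ball_of_drift b m (n - m)).
  pose proof (proj2 (ball_of_spec b (m + (n - m)))).
  lra.
Qed.

Lemma cantor_embedding_in b : Q (cantor_embedding b).
Proof.
  apply Q_closed. intros eps Heps.
  destruct (pow_lt_1_zero (/ 4) ltac:(rewrite Rabs_pos_eq; lra) eps Heps) as [N HN].
  exists (fst (ball_of b N)). split; [apply ball_of_spec|].
  pose proof (cantor_embedding_near b N).
  pose proof (ball_of_radius b N).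
  specialize (HN N (le_n N)). rewrite Rabs_pos_eq in HN by (apply pow_le; lra).
  pose proof (proj2 (ball_of_spec b N)).
  lra.
Qed.

(* Both limits lie within a third of the radius of the child balls, which is at
   most a ninth of the distance between their centres. *)
Lemma cantor_embedding_bit b b' k :
  ball_of b k = ball_of b' k -> cantor_embedding b = cantor_embedding b' -> b k = b' k.
Proof.
  intros Eball Elim.
  pose proof (cantor_embedding_near b (S k)) as Nb.
  pose proof (cantor_embedding_near b' (S k)) as Nb'.
  destruct (ball_of_spec b k) as [Qx Hr].
  simpl in Nb, Nb'. rewrite <- Eball in Nb'. rewrite <- Elim in Nb'.
  destruct (ball_of b k) as [x r]; simpl in Nb, Nb', Qx, Hr.
  destruct (neighbour_spec x r Qx Hr) as [_ [Hzx _]].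
  set (z := neighbour x r) in *.
  assert (Hd : 0 < Rabs (x - z)) by (apply Rabs_pos_lt; intro; apply Hzx; lra).
  pose proof (Rmin_l (Rabs (x - z) / 3) (r / 4)).
  destruct (b k), (b' k); simpl in Nb, Nb'; try reflexivity; exfalso.
  - pose proof (Rabs_triang (x - cantor_embedding b) (cantor_embedding b - z)).
    rewrite Rabs_minus_sym in Nb'.
    replace (x - cantor_embedding b + (cantor_embedding b - z)) with (x - z) in * by ring.
    lra.
  - pose proof (Rabs_triang (x - cantor_embedding b) (cantor_embedding b - z)).
    rewrite Rabs_minus_sym in Nb.
    replace (x - cantor_embedding b + (cantor_embedding b - z)) with (x - z) in * by ring.
    lra.
Qed.

Lemma cantor_embedding_inj b b' : cantor_embedding b = cantor_embedding b' -> b = b'.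
Proof.
  intros Elim.
  assert (H : forall k, ball_of b k = ball_of b' k /\ b k = b' k).
  { induction k as [|k [Eball Ebit]].
    - split; [reflexivity|]. apply cantor_embedding_bit; [reflexivity | exact Elim].
    - assert (Eball' : ball_of b (S k) = ball_of b' (S k))
        by (simpl; rewrite Eball, Ebit; reflexivity).
      split; [exact Eball'|]. apply cantor_embedding_bit; assumption. }
  apply functional_extensionality. intro k. apply H.
Qed.

End CantorScheme.

Lemma perfect_embeds_cantor Q : closedR Q -> no_isolated_pointR Q -> (exists s, Q s) ->
  exists f : cantor -> R, (forall b, Q (f b)) /\ forall b b', f b = f b' -> b = b'.
Proof.
  intros Hcl Hiso Hne. exists (cantor_embedding Q Hiso Hne). split.
  - intro b. apply cantor_embedding_in, Hcl.
  - apply cantor_embedding_inj.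
Qed.

(** * Coding closed sets by points of Cantor space *)

(* The open interval of radius [2/m] around [(k1 - k2)/m], where [n] codes the
   triple [((k1, k2), m)]; it is empty for [m = 0], since [2 / 0 = 0]. *)
Definition basic_interval (n : nat) (y : R) : Prop :=
  let (a, m) := Cantor.of_nat n in
  let (k1, k2) := Cantor.of_nat a in
  Rabs (y - (INR k1 - INR k2) / INR m) < 2 / INR m.

Lemma IZR_INR_diff (z : Z) : IZR z = INR (Z.to_nat z) - INR (Z.to_nat (- z)).
Proof.
  rewrite !INR_IZR_INZ, <- minus_IZR. f_equal. lia.
Qed.

Lemma basic_interval_base x eps : 0 < eps ->
  exists n, basic_interval n x /\ forall y, basic_interval n y -> Rabs (y - x) < eps.
Proof.
  intros Heps.
  destruct (archimed_cor1 (eps / 3)) as [m [Hm Hm0]]; [lra|].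
  assert (Hpos : 0 < INR m) by (apply lt_0_INR; lia).
  assert (H3 : 3 / INR m < eps).
  { apply (Rmult_lt_reg_r (/ 3)); [lra|].
    replace (3 / INR m * / 3) with (/ INR m) by (field; lra). lra. }
  set (z := up (x * INR m)).
  destruct (archimed (x * INR m)) as [Hz1 Hz2]. fold z in Hz1, Hz2.
  assert (Hc : Rabs (x - IZR z / INR m) <= 1 / INR m).
  { replace (x - IZR z / INR m) with ((x * INR m - IZR z) / INR m) by (field; lra).
    unfold Rdiv. rewrite Rabs_mult, (Rabs_pos_eq (/ INR m)) by (left; apply Rinv_0_lt_compat, Hpos).
    apply Rmult_le_compat_r; [left; apply Rinv_0_lt_compat, Hpos|].
    apply Rabs_le. lra. }
  assert (H12 : 1 / INR m < 2 / INR m)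
    by (unfold Rdiv; apply Rmult_lt_compat_r; [apply Rinv_0_lt_compat|]; lra).
  exists (Cantor.to_nat (Cantor.to_nat (Z.to_nat z, Z.to_nat (- z)), m)).
  unfold basic_interval. rewrite !Cantor.cancel_of_to, <- IZR_INR_diff.
  split; [lra|].
  intros y Hy.
  pose proof (Rabs_triang (y - IZR z / INR m) (IZR z / INR m - x)) as Htri.
  rewrite (Rabs_minus_sym (IZR z / INR m)) in Htri.
  replace (y - IZR z / INR m + (IZR z / INR m - x)) with (y - x) in Htri by ring.
  replace (3 / INR m) with (2 / INR m + 1 / INR m) in H3 by (field; lra).
  lra.
Qed.

Definition closed_of_code (c : cantor) (x : R) : Prop :=
  forall n, c n = true -> ~ basic_interval n x.

Lemma closed_of_code_surj K : closedR K -> exists c, closed_of_code c = K.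
Proof.
  intros HK.
  exists (fun n => if excluded_middle_informative (exists y, basic_interval n y /\ K y)
                   then false else true).
  apply functional_extensionality. intro x. apply propositional_extensionality. split.
  - intros Hx. apply HK. intros eps Heps. apply NNPP. intros Hfar.
    destruct (basic_interval_base x eps Heps) as [n [Hxn Hn]].
    apply (Hx n); [|exact Hxn].
    destruct (excluded_middle_informative _) as [[y [Hyn Ky]]|]; [|reflexivity].
    exfalso. apply Hfar. exists y. split; [exact Ky|]. rewrite Rabs_minus_sym. apply Hn, Hyn.
  - intros Kx n. destruct (excluded_middle_informative _) as [_|Hn]; [discriminate|].
    intros _ Hxn. apply Hn. exists x. split; assumption.
Qed.

Lemma closedR_singleton x : closedR (fun y => y = x).
Proof.
  intros y Hy. apply NNPP. intros Hne.
  destruct (Hy (Rabs (y - x))) as [z [-> Hz]]; [apply Rabs_pos_lt; lra | lra].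
Qed.

Definition real_of_code (c : cantor) : R := epsilon (inhabits 0) (closed_of_code c).

Lemma real_of_code_surj x : exists c, real_of_code c = x.
Proof.
  destruct (closed_of_code_surj _ (closedR_singleton x)) as [c Hc].
  exists c. unfold real_of_code. rewrite Hc. apply epsilon_spec. exists x. reflexivity.
Qed.

Definition interleave {A : Type} (f g : nat -> A) (n : nat) : A :=
  if Nat.even n then f (Nat.div2 n) else g (Nat.div2 n).

Lemma interleave_surj {A : Type} (f g : nat -> A) (a : A) :
  (exists n, f n = a) \/ (exists n, g n = a) -> exists n, interleave f g n = a.
Proof.
  unfold interleave. intros [[n E]|[n E]].
  - exists (2 * n)%nat. rewrite Nat.even_mul, Nat.div2_double. exact E.
  - exists (S (2 * n)). rewrite Nat.even_succ, Nat.odd_mul, Nat.div2_succ_double. exact E.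
Qed.

Definition cantor_fst (c : cantor) (n : nat) : bool := c (2 * n)%nat.
Definition cantor_snd (c : cantor) (n : nat) : bool := c (S (2 * n)).

Lemma cantor_fst_interleave a b : cantor_fst (interleave a b) = a.
Proof.
  apply functional_extensionality. intro n. unfold cantor_fst, interleave.
  rewrite Nat.even_mul, Nat.div2_double. reflexivity.
Qed.

Lemma cantor_snd_interleave a b : cantor_snd (interleave a b) = b.
Proof.
  apply functional_extensionality. intro n. unfold cantor_snd, interleave.
  rewrite Nat.even_succ, Nat.odd_mul, Nat.div2_succ_double. reflexivity.
Qed.

Definition dir_of_code (c : cantor) : pt :=
  (real_of_code (cantor_fst c), real_of_code (cantor_fst (cantor_snd c))).

Definition set_of_code (c : cantor) : R -> Prop :=
  closed_of_code (cantor_snd (cantor_snd c)).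

Lemma code_surj e K : closedR K -> exists c, dir_of_code c = e /\ set_of_code c = K.
Proof.
  intros HK. destruct e as [e1 e2].
  destruct (real_of_code_surj e1) as [c1 <-].
  destruct (real_of_code_surj e2) as [c2 <-].
  destruct (closed_of_code_surj K HK) as [c3 <-].
  exists (interleave c1 (interleave c2 c3)).
  unfold dir_of_code, set_of_code.
  rewrite !cantor_snd_interleave, !cantor_fst_interleave. split; reflexivity.
Qed.

(** * Points of the circle with a prescribed coordinate *)

Definition circle_point (e : pt) (s : R) : pt :=
  (s * fst e - sqrt (1 - s ^ 2) * snd e, s * snd e + sqrt (1 - s ^ 2) * fst e).

Lemma dot_circle_point e s : S1 e -> dot (circle_point e s) e = s.
Proof.
  unfold S1, dot, circle_point. cbn [fst snd]. intros He.
  replace ((s * fst e - sqrt (1 - s ^ 2) * snd e) * fst e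
           + (s * snd e + sqrt (1 - s ^ 2) * fst e) * snd e)
    with (s * (fst e ^ 2 + snd e ^ 2)) by ring.
  rewrite He. ring.
Qed.

Lemma S1_circle_point e s : S1 e -> -1 <= s <= 1 -> S1 (circle_point e s).
Proof.
  unfold S1, circle_point. cbn [fst snd]. intros He Hs.
  assert (W : sqrt (1 - s ^ 2) * sqrt (1 - s ^ 2) = 1 - s ^ 2) by (apply sqrt_sqrt; nra).
  set (w := sqrt (1 - s ^ 2)) in *.
  replace ((s * fst e - w * snd e) ^ 2 + (s * snd e + w * fst e) ^ 2)
    with ((s ^ 2 + w * w) * (fst e ^ 2 + snd e ^ 2)) by ring.
  rewrite He, W. ring.
Qed.

Lemma dot_S1_bound e x : S1 e -> S1 x -> -1 <= dot x e <= 1.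
Proof.
  unfold S1, dot. intros He Hx.
  assert (Hcs : (fst x * fst e + snd x * snd e) ^ 2
                + (fst x * snd e - snd x * fst e) ^ 2 = 1)
    by (replace 1 with ((fst x ^ 2 + snd x ^ 2) * (fst e ^ 2 + snd e ^ 2))
          by (rewrite Hx, He; ring); ring).
  set (t := fst x * fst e + snd x * snd e) in *.
  pose proof (pow2_ge_0 (fst x * snd e - snd x * fst e)).
  split; nra.
Qed.

(* Writing [a = dot e e'], the equation [dot (circle_point e s) e' = y] reduces
   to the quadratic [s^2 - 2 a y s + y^2 + a^2 - 1 = 0]. *)
Definition level_root (e e' : pt) (y : R) (b : bool) : R :=
  let a := dot e e' in
  let D := (y * a) ^ 2 - y ^ 2 + 1 - a ^ 2 in
  y * a + (if b then sqrt D else - sqrt D).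

Lemma level_roots e e' y s : S1 e -> S1 e' -> -1 <= s <= 1 ->
  dot (circle_point e s) e' = y -> s = level_root e e' y true \/ s = level_root e e' y false.
Proof.
  unfold S1, dot, circle_point, level_root. cbn [fst snd]. intros He He' Hs Hy.
  assert (W : sqrt (1 - s ^ 2) * sqrt (1 - s ^ 2) = 1 - s ^ 2) by (apply sqrt_sqrt; nra).
  set (w := sqrt (1 - s ^ 2)) in *.
  set (a := fst e * fst e' + snd e * snd e') in *.
  set (b := fst e * snd e' - snd e * fst e').
  assert (Hab : a ^ 2 + b ^ 2 = 1).
  { unfold a, b.
    replace 1 with ((fst e ^ 2 + snd e ^ 2) * (fst e' ^ 2 + snd e' ^ 2)) by (rewrite He, He'; ring).
    ring. }
  assert (Hy' : y = s * a + w * b) by (rewrite <- Hy; unfold a, b; ring).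
  assert (Hyb : (y - s * a) ^ 2 = (1 - s ^ 2) * (1 - a ^ 2)).
  { replace (y - s * a) with (w * b) by lra. replace (1 - a ^ 2) with (b ^ 2) by lra.
    rewrite <- W. ring. }
  assert (Hsq : (s - y * a) ^ 2 = (y * a) ^ 2 - y ^ 2 + 1 - a ^ 2).
  { assert (Id : (s - y * a) ^ 2 - ((y * a) ^ 2 - y ^ 2 + 1 - a ^ 2)
                 = (y - s * a) ^ 2 - (1 - s ^ 2) * (1 - a ^ 2)) by ring.
    lra. }
  change (dot e e') with a. rewrite <- Hsq, <- Rsqr_pow2, sqrt_Rsqr_abs.
  destruct (Rle_or_lt 0 (s - y * a)).
  - left. rewrite Rabs_pos_eq by assumption. ring.
  - right. rewrite Rabs_left by assumption. ring.
Qed.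

(* [I] is small when Cantor space is not covered by countably many points
   together with countably many points per element of [I]; this stands in for
   "[I] has fewer than continuum many elements" without cardinal arithmetic. *)
Definition small {K : Type} (I : K -> Prop) : Prop :=
  ~ exists (g : K -> nat -> cantor) (g0 : nat -> cantor),
      forall c, (exists n, g0 n = c) \/ (exists j n, I j /\ g j n = c).

Lemma cantor_uncountable (g0 : nat -> cantor) : exists c, forall n, g0 n <> c.
Proof.
  exists (fun n => negb (g0 n n)). intros n E.
  apply (f_equal (fun c => c n)) in E. destruct (g0 n n); discriminate.
Qed.

Lemma small_avoid {K : Type} (I : K -> Prop) (Q : R -> Prop) :
  small I -> closedR Q -> no_isolated_pointR Q -> (exists s, Q s) ->
  forall (h : K -> nat -> R) (h0 : nat -> R),
  exists s, Q s /\ (forall j n, I j -> s <> h j n) /\ (forall n, s <> h0 n).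
Proof.
  intros HI Hcl Hiso Hne h h0.
  destruct (perfect_embeds_cantor Q Hcl Hiso Hne) as [f [Hf Hinj]].
  set (f_inv := fun r => epsilon (inhabits (fun _ => false)) (fun c : cantor => f c = r)).
  assert (Hinv : forall c, f_inv (f c) = c).
  { intro c. apply Hinj. unfold f_inv.
    apply (epsilon_spec _ (fun c' => f c' = f c)). exists c. reflexivity. }
  apply NNPP. intros Hno. apply HI.
  exists (fun j n => f_inv (h j n)), (fun n => f_inv (h0 n)). intros c.
  destruct (classic (exists n, f c = h0 n)) as [[n En]|N0].
  - left. exists n. rewrite <- En. apply Hinv.
  - right. apply NNPP. intros N. apply Hno. exists (f c). split; [apply Hf|]. split.
    + intros j n Ij E. apply N. exists j, n. split; [exact Ij|]. rewrite <- E. apply Hinv.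
    + intros n E. apply N0. exists n. exact E.
Qed.

Lemma wf_minimal {T : Type} (lt : T -> T -> Prop) (P : T -> Prop) :
  well_founded lt -> (exists x, P x) -> exists m, P m /\ forall y, lt y m -> ~ P y.
Proof.
  intros Hwf [x Px]. induction x as [x IH] using (well_founded_induction Hwf).
  destruct (classic (exists y, lt y x /\ P y)) as [[y [Hy Py]]|N].
  - exact (IH y Hy Py).
  - exists x. split; [exact Px|]. intros y Hy Py. apply N. exists y. split; assumption.
Qed.

(* Either every initial segment of [lt] is small, or the first one that is not
   is covered by countably many codes per element; its elements, each taking
   care of countably many codes [tau x n], are then the stages. *)
Lemma exists_small_stages (lt : cantor -> cantor -> Prop) : well_founded lt ->
  exists (St : cantor -> Prop) (tau : cantor -> nat -> cantor),
    (forall x, St x -> small (fun j => lt j x)) /\ (forall c, exists x n, St x /\ tau x n = c).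
Proof.
  intros Hwf.
  destruct (classic (exists x, ~ small (fun j => lt j x))) as [Hbig|Hall].
  - destruct (wf_minimal lt _ Hwf Hbig) as [x0 [Hx0 Hmin]].
    apply NNPP in Hx0. destruct Hx0 as [g [g0 Hg]].
    exists (fun j => lt j x0), (fun j => interleave (g j) g0). split.
    + intros x Hx. apply NNPP. exact (Hmin x Hx).
    + assert (Hx : exists x, lt x x0).
      { destruct (cantor_uncountable g0) as [c Hc].
        destruct (Hg c) as [[n En]|[j [n [Hj _]]]]; [exfalso; exact (Hc n En)|].
        exists j. exact Hj. }
      destruct Hx as [x Hx].
      intros c. destruct (Hg c) as [Hc|[j [n [Hj Ejn]]]].
      * exists x. destruct (interleave_surj (g x) g0 c (or_intror Hc)) as [n En].
        exists n. split; assumption.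
      * exists j. destruct (interleave_surj (g j) g0 c (or_introl (ex_intro _ n Ejn))) as [m Em].
        exists m. split; assumption.
  - exists (fun _ => True), (fun x _ => x). split.
    + intros x _. apply NNPP. intros N. apply Hall. exists x. exact N.
    + intros c. exists c, O. split; [exact I | reflexivity].
Qed.

Lemma wf_recursive_choice {T S : Type} (lt : T -> T -> Prop) (s0 : S)
  (OK : T -> (T -> S) -> S -> Prop) :
  well_founded lt ->
  (forall x f g s, (forall y, lt y x -> f y = g y) -> OK x f s -> OK x g s) ->
  (forall x f, exists s, OK x f s) ->
  exists F : T -> S, forall x, OK x F (F x).
Proof.
  intros Hwf Hloc Hex.
  set (restrict := fun x (rec : forall y, lt y x -> S) y =>
         match excluded_middle_informative (lt y x) with
         | left h => rec y h
         | right _ => s0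
         end).
  set (step := fun x rec => epsilon (inhabits s0) (OK x (restrict x rec))).
  exists (Fix Hwf (fun _ => S) step). intros x.
  rewrite Fix_eq.
  - apply (Hloc x (restrict x (fun y _ => Fix Hwf (fun _ => S) step y))).
    + intros y Hy. unfold restrict. destruct (excluded_middle_informative (lt y x)); tauto.
    + apply epsilon_spec, Hex.
  - intros y f g Hfg. unfold step. f_equal.
    assert (E : restrict y f = restrict y g).
    { apply functional_extensionality. intros z. unfold restrict.
      destruct (excluded_middle_informative (lt z y)); [apply Hfg | reflexivity]. }
    rewrite E. reflexivity.
Qed.

(** * The transfinite construction *)

Definition admissible (e : pt) (Q : R -> Prop) : Prop :=
  S1 e /\ closedR Q /\ no_isolated_pointR Q /\ (forall s, Q s -> -1 <= s <= 1) /\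
  exists s, Q s.

Section Construction.

Variables (e : cantor -> pt) (Q : cantor -> R -> Prop).
Variable lt : cantor -> cantor -> Prop.
Hypothesis lt_wf : well_founded lt.
Hypothesis lt_trichotomy : forall x y, lt x y \/ x = y \/ lt y x.
Variables (St : cantor -> Prop) (tau : cantor -> nat -> cantor).
Hypothesis St_small : forall x, St x -> small (fun j => lt j x).
Hypothesis tau_cover : forall c, exists x n, St x /\ tau x n = c.

Let req x n := admissible (e (tau x n)) (Q (tau x n)).

Definition point_ok (x : cantor) (prev : cantor -> (nat -> pt) * (nat -> R)) (n : nat)
    (a : pt) : Prop :=
  req x n ->
    S1 a /\ Q (tau x n) (dot a (e (tau x n))) /\
    forall j m, lt j x -> req j m -> dot a (e (tau j m)) <> snd (prev j) m.

Definition value_ok (x : cantor) (prev : cantor -> (nat -> pt) * (nat -> R))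
    (a : nat -> pt) (n : nat) (y : R) : Prop :=
  req x n ->
    Q (tau x n) y /\
    (forall j m, lt j x -> y <> dot (fst (prev j) m) (e (tau x n))) /\
    forall m, y <> dot (a m) (e (tau x n)).

(* Stage [x] chooses, for each code [tau x n], a point [fst st n] of [A] and a
   value [snd st n] to be kept out of the projection of [A]. *)
Definition stage_ok (x : cantor) (prev : cantor -> (nat -> pt) * (nat -> R))
    (st : (nat -> pt) * (nat -> R)) : Prop :=
  forall n, point_ok x prev n (fst st n) /\ value_ok x prev (fst st) n (snd st n).

Lemma exists_point_ok x prev n : St x -> exists a, point_ok x prev n a.
Proof.
  intros Hx. destruct (classic (req x n)) as [Hreq|Hnreq]; [|exists (0, 0); intro; contradiction].
  destruct Hreq as [He [Hcl [Hiso [Hsub Hne]]]].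
  set (root_l := fun j m => level_root (e (tau x n)) (e (tau j m)) (snd (prev j) m) true).
  set (root_r := fun j m => level_root (e (tau x n)) (e (tau j m)) (snd (prev j) m) false).
  destruct (small_avoid _ _ (St_small x Hx) Hcl Hiso Hne
              (fun j => interleave (root_l j) (root_r j)) (fun _ => 0)) as [s [Qs [Hs _]]].
  exists (circle_point (e (tau x n)) s). intros _.
  split; [apply S1_circle_point; auto|].
  split; [rewrite dot_circle_point; assumption|].
  intros j m Hj [Hej _] E.
  destruct (interleave_surj (root_l j) (root_r j) s) as [k Hk].
  - destruct (level_roots _ _ _ _ He Hej (Hsub s Qs) E); [left | right]; exists m; auto.
  - exact (Hs j k Hj (eq_sym Hk)).
Qed.

Lemma exists_value_ok x prev a n : St x -> exists y, value_ok x prev a n y.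
Proof.
  intros Hx. destruct (classic (req x n)) as [Hreq|Hnreq]; [|exists 0; intro; contradiction].
  destruct Hreq as [_ [Hcl [Hiso [_ Hne]]]].
  destruct (small_avoid _ _ (St_small x Hx) Hcl Hiso Hne
              (fun j m => dot (fst (prev j) m) (e (tau x n)))
              (fun m => dot (a m) (e (tau x n)))) as [y [Qy [Hprev Hsame]]].
  exists y. intros _. split; [exact Qy|]. split; [|exact Hsame].
  intros j m Hj. exact (Hprev j m Hj).
Qed.

Lemma exists_stage_ok x prev : St x -> exists st, stage_ok x prev st.
Proof.
  intros Hx.
  destruct (choice (point_ok x prev)) as [a Ha].
  { intros n. apply exists_point_ok, Hx. }
  destruct (choice (value_ok x prev a)) as [y Hy].
  { intros n. apply exists_value_ok, Hx. }
  exists (a, y). intros n. split; [apply Ha | apply Hy].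
Qed.

Lemma exists_stage_family :
  exists F : cantor -> (nat -> pt) * (nat -> R), forall x, St x -> stage_ok x F (F x).
Proof.
  apply (wf_recursive_choice lt ((fun _ => (0, 0)), (fun _ => 0))
           (fun x prev st => St x -> stage_ok x prev st)); [exact lt_wf | |].
  - intros x f g st Hfg Hok Hx n.
    destruct (Hok Hx n) as [Hpt Hval]. split.
    + intros Hn. destruct (Hpt Hn) as [H1 [H2 H3]]. split; [exact H1|]. split; [exact H2|].
      intros j m Hj. rewrite <- (Hfg j Hj). apply H3, Hj.
    + intros Hn. destruct (Hval Hn) as [H1 [H2 H3]]. split; [exact H1|]. split; [|exact H3].
      intros j m Hj. rewrite <- (Hfg j Hj). apply H2, Hj.
  - intros x f. destruct (classic (St x)) as [Hx|Hx].
    + destruct (exists_stage_ok x f Hx) as [st Hst]. exists st. intros _. exact Hst.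
    + exists (fun _ => (0, 0), fun _ => 0). intros Hx'. contradiction.
Qed.

Lemma exists_staged_circle_set : exists A : pt -> Prop,
  (forall a, A a -> S1 a) /\
  forall c, admissible (e c) (Q c) ->
    (exists a, A a /\ Q c (dot a (e c))) /\
    (exists y, Q c y /\ forall a, A a -> dot a (e c) <> y).
Proof.
  destruct exists_stage_family as [F HF].
  exists (fun a => exists x n, St x /\ req x n /\ a = fst (F x) n). split.
  - intros a [x [n [Hx [Hn ->]]]]. apply (proj1 (HF x Hx n) Hn).
  - intros c Hc. destruct (tau_cover c) as [x [n [Hx <-]]].
    destruct (HF x Hx n) as [Hpt Hval].
    destruct (Hpt Hc) as [_ [HQa _]]. destruct (Hval Hc) as [HQy [Hy_prev Hy_same]].
    split.
    + exists (fst (F x) n). split; [exists x, n; auto | exact HQa].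
    + exists (snd (F x) n). split; [exact HQy|].
      intros a [x' [m [Hx' [Hm ->]]]] E.
      destruct (lt_trichotomy x' x) as [L|[<-|L]].
      * exact (Hy_prev x' m L (eq_sym E)).
      * exact (Hy_same m (eq_sym E)).
      * destruct (proj1 (HF x' Hx' m) Hm) as [_ [_ Ha_prev]].
        exact (Ha_prev x n L Hc E).
Qed.

End Construction.

Lemma exists_circle_set (e : cantor -> pt) (Q : cantor -> R -> Prop) :
  exists A : pt -> Prop,
  (forall a, A a -> S1 a) /\
  forall c, admissible (e c) (Q c) ->
    (exists a, A a /\ Q c (dot a (e c))) /\
    (exists y, Q c y /\ forall a, A a -> dot a (e c) <> y).
Proof.
  destruct (WellOrdering.exists_wf_trichotomous cantor) as [lt [Hwf Htri]].
  destruct (exists_small_stages lt Hwf) as [St [tau [Hsmall Hcover]]].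
  exact (exists_staged_circle_set e Q lt Hwf Htri St tau Hsmall Hcover).
Qed.

Section ProjectionLine.

Variables p u : pt.
Hypothesis u_nonzero : u <> (0, 0).

Definition unit_dir : pt := (fst u / sqrt (dot u u), snd u / sqrt (dot u u)).

(* The point of the line through [p] along [u] whose coordinate [dot _ unit_dir] is [s]. *)
Definition line_point (s : R) : pt :=
  let t := s / sqrt (dot u u) - dot p u / dot u u in
  (fst p + t * fst u, snd p + t * snd u).

Lemma dot_self_pos : 0 < dot u u.
Proof.
  unfold dot. destruct u as [u1 u2]. cbn [fst snd].
  destruct (Req_dec u1 0) as [->|H1]; [destruct (Req_dec u2 0) as [->|H2]|].
  - exfalso. apply u_nonzero. reflexivity.
  - nra.
  - nra.
Qed.

Lemma sqrt_dot_self : sqrt (dot u u) * sqrt (dot u u) = dot u u /\ 0 < sqrt (dot u u).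
Proof.
  pose proof dot_self_pos. split; [apply sqrt_sqrt; lra | apply sqrt_lt_R0; lra].
Qed.

Lemma S1_unit_dir : S1 unit_dir.
Proof.
  destruct sqrt_dot_self as [Hn Hn0]. unfold S1, unit_dir. cbn [fst snd].
  set (n := sqrt (dot u u)) in *.
  replace ((fst u / n) ^ 2 + (snd u / n) ^ 2) with (dot u u / (n * n))
    by (unfold dot; field; lra).
  rewrite Hn. field. pose proof dot_self_pos. lra.
Qed.

Lemma orth_proj_line_point x : orth_proj p u x = line_point (dot x unit_dir).
Proof.
  destruct sqrt_dot_self as [Hn Hn0]. pose proof dot_self_pos as Hpos.
  unfold orth_proj, line_point, unit_dir. cbv zeta.
  set (n := sqrt (dot u u)) in *.
  replace (dot (fst x - fst p, snd x - snd p) u / dot u u)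
    with (dot x (fst u / n, snd u / n) / n - dot p u / dot u u); [reflexivity|].
  replace (dot x (fst u / n, snd u / n) / n) with (dot x u / (n * n))
    by (unfold dot; cbn [fst snd]; field; lra).
  rewrite Hn. unfold dot. cbn [fst snd]. field. unfold dot in Hpos. lra.
Qed.

Lemma dist2_line_point s t : dist2 (line_point s) (line_point t) = Rabs (s - t).
Proof.
  destruct sqrt_dot_self as [Hn Hn0]. pose proof dot_self_pos as Hpos.
  unfold dist2, line_point. cbn [fst snd].
  set (n := sqrt (dot u u)) in *. set (k := dot p u / dot u u).
  replace ((fst p + (s / n - k) * fst u - (fst p + (t / n - k) * fst u)) ^ 2 +
           (snd p + (s / n - k) * snd u - (snd p + (t / n - k) * snd u)) ^ 2)
    with (Rsqr (s - t) * (dot u u / (n * n))) by (unfold Rsqr, dot; field; lra).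
  rewrite Hn, Rdiv_diag, Rmult_1_r by lra. apply sqrt_Rsqr_abs.
Qed.

Lemma line_point_inj s t : line_point s = line_point t -> s = t.
Proof.
  intros E. pose proof (dist2_line_point s t) as D.
  rewrite E, dist2_line_point, Rminus_diag, Rabs_R0 in D.
  apply Rminus_diag_uniq. destruct (Req_dec (s - t) 0) as [H|H]; [exact H|].
  exfalso. apply Rabs_no_R0 in H. lra.
Qed.

Lemma image_S1_line_point z :
  image (orth_proj p u) S1 z <-> exists s, -1 <= s <= 1 /\ z = line_point s.
Proof.
  split.
  - intros [x [Sx ->]]. exists (dot x unit_dir). split.
    + apply dot_S1_bound; [apply S1_unit_dir | exact Sx].
    + apply orth_proj_line_point.
  - intros [s [Hs ->]]. exists (circle_point unit_dir s). split.
    + apply S1_circle_point; [apply S1_unit_dir | exact Hs].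
    + rewrite orth_proj_line_point, dot_circle_point; [reflexivity | apply S1_unit_dir].
Qed.

Lemma perfect_in_image_admissible P :
  perfect_in (image (orth_proj p u) S1) P -> (exists z, P z) ->
  admissible unit_dir (fun s => P (line_point s)).
Proof.
  intros [Psub [Pcl Pni]] [z Pz].
  assert (Hbound : forall s, P (line_point s) -> -1 <= s <= 1).
  { intros s Ps. destruct (proj1 (image_S1_line_point _) (Psub _ Ps)) as [t [Ht E]].
    apply line_point_inj in E. subst t. exact Ht. }
  split; [apply S1_unit_dir|]. split; [|split; [|split; [exact Hbound|]]].
  - intros s Hs. apply Pcl.
    + apply image_S1_line_point. exists s. split; [|reflexivity].
      split; apply Rnot_lt_le; intros Hout.
      * destruct (Hs (-1 - s)) as [t [Pt Ht]]; [lra|].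
        pose proof (Hbound t Pt). apply Rabs_def2 in Ht. lra.
      * destruct (Hs (s - 1)) as [t [Pt Ht]]; [lra|].
        pose proof (Hbound t Pt). apply Rabs_def2 in Ht. lra.
    + intros eps Heps. destruct (Hs eps Heps) as [t [Pt Ht]].
      exists (line_point t). split; [exact Pt|]. rewrite dist2_line_point. exact Ht.
  - intros s Ps eps Heps. destruct (Pni _ Ps eps Heps) as [y [Py [Hne Hd]]].
    destruct (proj1 (image_S1_line_point _) (Psub _ Py)) as [t [_ ->]].
    exists t. split; [exact Py|]. split.
    + intros ->. apply Hne. reflexivity.
    + rewrite dist2_line_point in Hd. exact Hd.
  - destruct (proj1 (image_S1_line_point _) (Psub _ Pz)) as [t [_ ->]].
    exists t. exact Pz.
Qed.

End ProjectionLine.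

Theorem mainTheorem5 :
  exists A : pt -> Prop, (forall x, A x -> S1 x) /\
    forall p u : pt, u <> (0, 0) ->
      Bernstein_in (image (orth_proj p u) S1) (image (orth_proj p u) A).
Proof.
  destruct (exists_circle_set dir_of_code set_of_code) as [A [A_S1 HA]].
  exists A. split; [exact A_S1|].
  intros p u Hu P HP HPne.
  pose proof (perfect_in_image_admissible p u Hu P HP HPne) as Hadm.
  destruct (code_surj (unit_dir u) _ (proj1 (proj2 Hadm))) as [c [Edir Eset]].
  destruct (HA c) as [[a [Aa Pa]] [y [Py Hy]]]; [rewrite Edir, Eset; exact Hadm|].
  rewrite Edir, Eset in *.
  split.
  - exists (line_point p u (dot a (unit_dir u))). split; [exact Pa|].
    exists a. split; [exact Aa | symmetry; apply orth_proj_line_point, Hu].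
  - exists (line_point p u y). split; [exact Py|]. split; [apply HP, Py|].
    intros [a' [Aa' E]]. rewrite orth_proj_line_point in E by exact Hu.
    exact (Hy a' Aa' (eq_sym (line_point_inj p u Hu _ _ E))).
Qed.
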